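(* Let $X,Y$ be orbit-finite sets and let $F$ be an equivariant set of finitely supported functions $X\to Y$. Then $F$ is orbit-finite if and only if there is $k\in\mathbb N$ such that every function in $F$ is supported by at most $k$ atoms.
   Context: Fix a countably infinite set $\mathbb A$ of atoms; atom automorphisms are bijections of $\mathbb A$. For a set with an action of atom automorphisms, $x$ is supported by $\bar a\in\mathbb A^*$ if every automorphism fixing $\bar a$ pointwise fixes $x$; it is finitely supported if some finite tuple supports it, and a set is equivariant if it is mapped to itself by all automorphisms. Automorphisms act on functions by $\pi(f)=\pi\circ f\circ\pi^{-1}$. A subset $Y$ is orbit-finite if all its elements are finitely supported and for some tuple $\bar a$ it is a union of finitely many orbits of the group of automorphisms fixing $\bar a$ pointwise. ''Supported by at most $k$ atoms'' means supported by some tuple of length at most $k$. *)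

From Stdlib Require Import List Arith.
Import ListNotations.

(** Atoms: the countably infinite set [nat].  Atom automorphisms:
    bijections of [nat], given with their inverse. *)
Record perm : Type := Perm {
  pfun :> nat -> nat;
  pinv : nat -> nat;
  pinvK : forall a, pinv (pfun a) = a;
  pfunK : forall a, pfun (pinv a) = a }.

Definition perm_id : perm := @Perm (fun a => a) (fun a => a)
  (fun _ => eq_refl) (fun _ => eq_refl).

Definition perm_comp (p q : perm) : perm.
Proof.
  refine (@Perm (fun a => p (q a)) (fun a => pinv q (pinv p a)) _ _).
  - intro a; rewrite pinvK; apply pinvK.
  - intro a; rewrite pfunK; apply pfunK.
Defined.

Definition perm_inv (p : perm) : perm :=
  @Perm (pinv p) (pfun p) (pfunK p) (pinvK p).

Record gset : Type := GSet {
  carrier :> Type;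
  act : perm -> carrier -> carrier;
  act_id : forall x, act perm_id x = x;
  act_comp : forall p q x, act (perm_comp p q) x = act p (act q x) }.

Definition fixes_tuple (abar : list nat) (p : perm) : Prop :=
  forall a, In a abar -> p a = a.

Section Nominal.
Context {T : Type} (actT : perm -> T -> T).

Definition supports (abar : list nat) (x : T) : Prop :=
  forall p : perm, fixes_tuple abar p -> actT p x = x.

Definition fin_supp (x : T) : Prop := exists abar, supports abar x.

Definition supp_le (k : nat) (x : T) : Prop :=
  exists abar, length abar <= k /\ supports abar x.

Definition equivariant (S : T -> Prop) : Prop :=
  forall (p : perm) (x : T), S (actT p x) <-> S x.

(** Orbit-finite subset: all elements finitely supported, and for some
    tuple [abar] it is the union of the finitely many orbits (of the
    group of automorphisms fixing [abar] pointwise) of the elements of a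
    finite list [reps]. *)
Definition orbit_finite (S : T -> Prop) : Prop :=
  (forall x, S x -> fin_supp x) /\
  exists (abar : list nat) (reps : list T),
    forall x, S x <->
      exists r p, In r reps /\ fixes_tuple abar p /\ x = actT p r.
End Nominal.

Definition fun_act (X Y : gset) (p : perm) (f : X -> Y) : X -> Y :=
  fun x => act Y p (f (act X (perm_inv p) x)).

(* (=>) holds in any set with an atom action: the finitely many orbit
   representatives have a common support s, and p(r) is supported by p(s),
   so |s| bounds every support.

   (<=) Every f in F can be renamed by a permutation so that its (at most
   k-element) support lands in {0, ..., k-1}; the renamed function is still
   in F by equivariance.  So it suffices that only finitely many functions
   X -> Y are supported by a fixed tuple D.  This rests on the key
   finiteness fact about an orbit-finite set Z: for ANY tuple D it is the
   union of finitely many orbits of the automorphisms fixing D (a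
   permutation can be corrected, without moving D, to send the common
   support of the representatives into D plus a fixed block of fresh
   atoms, leaving finitely many possibilities).  Consequently only finitely
   many elements of Z are supported by D, and a D-supported function is
   determined by its values on finitely many D-orbit representatives of X,
   each of which is one of finitely many elements of Y. *)

From Stdlib Require Import List Arith Lia.
From Stdlib Require Import Classical FunctionalExtensionality ProofIrrelevance.
Import ListNotations.

Lemma perm_ext (p q : perm) : (forall a, p a = q a) -> p = q.
Proof.
  intros Hpq. destruct p as [f fi fK1 fK2], q as [g gi gK1 gK2]; simpl in *.
  assert (f = g) by (apply functional_extensionality; exact Hpq). subst g.
  assert (fi = gi).
  { apply functional_extensionality; intro a.
    rewrite <- (gK1 (fi a)), fK2. reflexivity. }
  subst gi. f_equal; apply proof_irrelevance.
Qed.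

Lemma perm_inv_comp (p q : perm) :
  perm_inv (perm_comp p q) = perm_comp (perm_inv q) (perm_inv p).
Proof. apply perm_ext; reflexivity. Qed.

Lemma fixes_tuple_inv (s : list nat) (p : perm) :
  fixes_tuple s p -> fixes_tuple s (perm_inv p).
Proof.
  intros Hp a Ha; simpl. rewrite <- (Hp a Ha) at 1. apply pinvK.
Qed.

Definition swapf (a b x : nat) : nat :=
  if Nat.eq_dec x a then b else if Nat.eq_dec x b then a else x.

Lemma swapf_invol (a b x : nat) : swapf a b (swapf a b x) = x.
Proof.
  unfold swapf; repeat destruct Nat.eq_dec; subst; congruence.
Qed.

Definition swap (a b : nat) : perm :=
  Perm (swapf a b) (swapf a b) (swapf_invol a b) (swapf_invol a b).

Lemma interval_avoids (M n : nat) (L : list nat) :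
  length L <= n -> exists g, M <= g < M + S n /\ ~ In g L.
Proof.
  intros HL. apply NNPP; intro Hnone.
  assert (Hincl : incl (seq M (S n)) L).
  { intros a Ha. apply in_seq in Ha. apply NNPP; intro Hout.
    apply Hnone. exists a. split; [lia | exact Hout]. }
  pose proof (NoDup_incl_length (seq_NoDup (S n) M) Hincl) as Hlen.
  rewrite length_seq in Hlen. lia.
Qed.

Lemma upper_bound (K : list nat) : exists M, forall a, In a K -> a < M.
Proof.
  induction K as [|b K [M HM]]; [exists 0; intros a [] |].
  exists (S b + M). intros a [<-|Ha]; [lia | specialize (HM a Ha); lia].
Qed.

(* Renaming into fresh atoms: if all atoms of K are below M, any tuple can
   be moved, by a permutation fixing K, into K together with the block
   [M, M + |tuple|).  Built one atom at a time by transpositions. *)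
Lemma rename_into_block (K : list nat) (M : nat) :
  (forall a, In a K -> a < M) ->
  forall s, exists q : perm, fixes_tuple K q /\
    forall a, In a s -> In (q a) K \/ M <= q a < M + length s.
Proof.
  intros HK. induction s as [|b s IH].
  - exists perm_id. split; [intros a _; reflexivity | intros a []].
  - destruct IH as [q [HqK Hqs]].
    destruct (classic (In (q b) K \/ M <= q b < M + S (length s))) as [Hb|Hb].
    { exists q. split; [exact HqK|].
      intros a [<-|Ha]; [exact Hb|]. destruct (Hqs a Ha); [left | right; simpl]; auto; lia. }
    destruct (interval_avoids M (length s) (map q s)) as [g [Hg Hgs]].
    { rewrite length_map; lia. }
    exists (perm_comp (swap (q b) g) q). split.
    + intros a Ha. simpl. rewrite (HqK a Ha). unfold swapf.
      destruct (Nat.eq_dec a (q b)) as [Eab|_].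
      { exfalso; apply Hb; left; rewrite <- Eab; exact Ha. }
      destruct (Nat.eq_dec a g); [specialize (HK a Ha); lia | reflexivity].
    + intros a [<-|Ha]; simpl; unfold swapf.
      * destruct (Nat.eq_dec (q b) (q b)); [right; lia | congruence].
      * destruct (Nat.eq_dec (q a) (q b)) as [Eab|_].
        { exfalso; apply Hb; rewrite <- Eab. destruct (Hqs a Ha); [left | right]; auto; lia. }
        destruct (Nat.eq_dec (q a) g) as [Eag|_].
        { exfalso; apply Hgs; rewrite <- Eag; apply in_map; exact Ha. }
        destruct (Hqs a Ha); [left | right]; auto; lia.
Qed.

Lemma rename_into_prefix (s : list nat) :
  exists q : perm, forall a, In a s -> q a < length s.
Proof.
  destruct (rename_into_block [] 0 (fun a H => match H with end) s) as [q [_ Hq]].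
  exists q. intros a Ha. destruct (Hq a Ha) as [[]|H]. lia.
Qed.

Lemma choose_witnesses {C A : Type} (P : C -> A -> Prop) (L : list C) :
  exists R : list A, (forall a, In a R -> exists c, In c L /\ P c a) /\
    (forall c, In c L -> (exists a, P c a) -> exists a, In a R /\ P c a).
Proof.
  induction L as [|c L [R [Hsound Hcomplete]]].
  - exists []. split; [intros a [] | intros c []].
  - destruct (classic (exists a, P c a)) as [[a Ha]|Hnone].
    + exists (a :: R). split.
      * intros x [<-|Hx]; [exists c; split; [left|]; auto|].
        destruct (Hsound x Hx) as [c' [? ?]]; exists c'; split; [right|]; auto.
      * intros c' [<-|Hc'] Hex; [exists a; split; [left|]; auto|].
        destruct (Hcomplete c' Hc' Hex) as [x [? ?]]; exists x; split; [right|]; auto.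
    + exists R. split.
      * intros x Hx; destruct (Hsound x Hx) as [c' [? ?]]; exists c'; split; [right|]; auto.
      * intros c' [<-|Hc'] Hex; [contradiction | auto].
Qed.

Fixpoint tuples (A : list nat) (n : nat) : list (list nat) :=
  match n with
  | 0 => [[]]
  | S n => flat_map (fun a => map (cons a) (tuples A n)) A
  end.

Lemma tuples_complete (A t : list nat) :
  incl t A -> In t (tuples A (length t)).
Proof.
  induction t as [|a t IH]; intros Ht; simpl; [left; reflexivity|].
  apply in_flat_map. exists a. split; [apply Ht; left; reflexivity|].
  apply in_map, IH. intros x Hx; apply Ht; right; exact Hx.
Qed.

Definition finitely_many {T : Type} (P : T -> Prop) : Prop :=
  exists L : list T, forall z, P z -> In z L.

Section AtomActions.
Variable Z : gset.

Lemma act_ext (p q : perm) (z : Z) : (forall a, p a = q a) -> act Z p z = act Z q z.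
Proof. intro Hpq; rewrite (perm_ext p q Hpq); reflexivity. Qed.

Lemma act_inv_l (p : perm) (z : Z) : act Z (perm_inv p) (act Z p z) = z.
Proof.
  rewrite <- act_comp. transitivity (act Z perm_id z); [|apply act_id].
  apply act_ext; intro a. apply pinvK.
Qed.

Lemma supports_weaken (s s' : list nat) (z : Z) :
  incl s s' -> supports (act Z) s z -> supports (act Z) s' z.
Proof. intros Hincl Hs p Hp; apply Hs; intros a Ha; apply Hp, Hincl, Ha. Qed.

Lemma supports_act (s : list nat) (p : perm) (z : Z) :
  supports (act Z) s z -> supports (act Z) (map p s) (act Z p z).
Proof.
  intros Hs q Hq. rewrite <- act_comp.
  transitivity (act Z (perm_comp p (perm_comp (perm_inv p) (perm_comp q p))) z).
  - apply act_ext. intro a. simpl. rewrite pfunK. reflexivity.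
  - rewrite act_comp. f_equal. apply Hs. intros a Ha. simpl.
    rewrite Hq by (apply in_map; exact Ha). apply pinvK.
Qed.

Lemma act_on_support (s : list nat) (p q : perm) (z : Z) :
  supports (act Z) s z -> (forall a, In a s -> p a = q a) -> act Z p z = act Z q z.
Proof.
  intros Hs Hpq.
  transitivity (act Z q (act Z (perm_comp (perm_inv q) p) z)).
  - rewrite <- act_comp; apply act_ext; intro a; simpl; rewrite pfunK; reflexivity.
  - f_equal. apply Hs. intros a Ha. simpl. rewrite Hpq by exact Ha. apply pinvK.
Qed.

Lemma common_support (l : list Z) :
  (forall z, In z l -> fin_supp (act Z) z) ->
  exists s, forall z, In z l -> supports (act Z) s z.
Proof.
  induction l as [|z l IH]; intros Hfs; [exists []; intros z []|].
  destruct IH as [s2 H2]; [intros y Hy; apply Hfs; right; exact Hy|].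
  destruct (Hfs z (or_introl eq_refl)) as [s1 H1].
  exists (s1 ++ s2). intros y [<-|Hy].
  - apply supports_weaken with s1; [intros a Ha; apply in_or_app; auto | exact H1].
  - apply supports_weaken with s2; [intros a Ha; apply in_or_app; auto | auto].
Qed.

Lemma orbit_finite_bounded_support (S : Z -> Prop) :
  orbit_finite (act Z) S -> exists k, forall z, S z -> supp_le (act Z) k z.
Proof.
  intros [Hfs [abar [reps Hreps]]].
  destruct (common_support reps) as [s Hs].
  { intros r Hr. apply Hfs, Hreps. exists r, perm_id.
    split; [exact Hr | split; [intros a _; reflexivity | symmetry; apply act_id]]. }
  exists (length s). intros z Hz.
  destruct (proj1 (Hreps z) Hz) as [r [p [Hr [_ ->]]]].
  exists (map p s). split; [rewrite length_map; lia|].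
  apply supports_act, Hs, Hr.
Qed.

(* (<=) An equivariant subset with supports of size at most k is
   orbit-finite, provided only finitely many elements are supported by the
   atoms below k: every element can be renamed into one of those. *)
Lemma bounded_support_orbit_finite (S : Z -> Prop) (k : nat) :
  equivariant (act Z) S ->
  (forall z, S z -> supp_le (act Z) k z) ->
  finitely_many (supports (act Z) (seq 0 k)) ->
  orbit_finite (act Z) S.
Proof.
  intros HSeq Hk [L HL]. split.
  { intros z Hz. destruct (Hk z Hz) as [s [_ Hs]]. exists s; exact Hs. }
  destruct (choose_witnesses (fun g z : Z => S z /\ z = g) L) as [reps [Hsound Hcomplete]].
  exists [], reps. intro z. split.
  - intro Hz. destruct (Hk z Hz) as [s [Hlen Hs]].
    destruct (rename_into_prefix s) as [q Hq].
    assert (Hqz : supports (act Z) (seq 0 k) (act Z q z)).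
    { apply supports_weaken with (map q s); [|apply supports_act, Hs].
      intros a Ha. apply in_map_iff in Ha as [b [<- Hb]].
      apply in_seq. specialize (Hq b Hb). lia. }
    destruct (Hcomplete (act Z q z)) as [r [Hr [_ Hrq]]].
    { apply HL, Hqz. }
    { exists (act Z q z). split; [apply HSeq, Hz | reflexivity]. }
    exists r, (perm_inv q). split; [exact Hr|]. split; [intros a []|].
    rewrite Hrq. symmetry; apply act_inv_l.
  - intros [r [p [Hr [_ ->]]]]. destruct (Hsound r Hr) as [g [_ [HSr _]]].
    apply HSeq, HSr.
Qed.

Section OrbitFiniteZ.
Hypothesis HZ : orbit_finite (act Z) (fun _ => True).

Lemma orbit_finite_reps (D : list nat) :
  exists R : list Z, forall z,
    exists p z', fixes_tuple D p /\ In z' R /\ z = act Z p z'.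
Proof.
  destruct HZ as [Hfs [c [reps Hreps]]].
  destruct (common_support reps) as [s Hs]; [intros r _; apply Hfs; exact I|].
  destruct (upper_bound D) as [M HM].
  (* An element q(r) is determined by r and the tuple q(s); after a
     correction fixing D, that tuple ranges over a finite set of codes. *)
  set (codes := list_prod reps (tuples (D ++ seq M (length s)) (length s))).
  destruct (choose_witnesses (fun (cd : Z * list nat) (z' : Z) =>
     exists p : perm, map p s = snd cd /\ z' = act Z p (fst cd)) codes)
    as [R [_ HR]].
  exists R. intro z.
  destruct (proj1 (Hreps z) I) as [r [p [Hr [_ Hz]]]].
  destruct (rename_into_block D M HM (map p s)) as [corr [HcorrD Hcorr]].
  set (q := perm_comp corr p).
  destruct (HR (r, map q s)) as [z' [Hz' [p' [Hp's Hp'r]]]].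
  - apply in_prod; [exact Hr|].
    rewrite <- (length_map q s) at 2. apply tuples_complete.
    intros a Ha. apply in_map_iff in Ha as [b [<- Hb]]. apply in_or_app.
    destruct (Hcorr (p b)) as [H|H]; [apply in_map; exact Hb | left; exact H |].
    right; apply in_seq. rewrite length_map in H. unfold q; simpl. lia.
  - exists (act Z q r), q. split; reflexivity.
  - exists (perm_inv corr), z'.
    split; [apply fixes_tuple_inv, HcorrD|]. split; [exact Hz'|].
    rewrite Hz, Hp'r; simpl in Hp's |- *.
    rewrite (act_on_support s p' q r (Hs r Hr)).
    + unfold q; rewrite act_comp, act_inv_l; reflexivity.
    + apply map_ext_in_iff, Hp's.
Qed.

(* Only finitely many elements of an orbit-finite set are supported by a
   given tuple: each is fixed by its orbit, hence is a representative. *)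
Lemma supported_finitely_many (E : list nat) :
  finitely_many (supports (act Z) E).
Proof.
  destruct (orbit_finite_reps E) as [R HR]. exists R. intros z Hz.
  destruct (HR z) as [p [z' [Hp [Hz' ->]]]].
  rewrite <- (Hz (perm_inv p) (fixes_tuple_inv _ _ Hp)), act_inv_l. exact Hz'.
Qed.

End OrbitFiniteZ.
End AtomActions.

Definition fun_gset (X Y : gset) : gset.
Proof.
  refine (@GSet (X -> Y) (fun_act X Y) _ _).
  - intro f; apply functional_extensionality; intro x; unfold fun_act.
    rewrite (act_ext X (perm_inv perm_id) perm_id x (fun _ => eq_refl)), !act_id.
    reflexivity.
  - intros p q f; apply functional_extensionality; intro x; unfold fun_act.
    rewrite perm_inv_comp, !act_comp. reflexivity.
Defined.

Section Functions.
Variables X Y : gset.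

Lemma supports_apply (D s : list nat) (g : X -> Y) (x : X) :
  supports (fun_act X Y) D g -> supports (act X) s x ->
  supports (act Y) (D ++ s) (g x).
Proof.
  intros Hg Hx p Hp.
  assert (Hpg : fun_act X Y p g = g)
    by (apply Hg; intros a Ha; apply Hp, in_or_app; left; exact Ha).
  assert (Hpx : act X (perm_inv p) x = x)
    by (apply Hx, fixes_tuple_inv; intros a Ha; apply Hp, in_or_app; right; exact Ha).
  pose proof (f_equal (fun h => h x) Hpg) as Hgx. unfold fun_act in Hgx.
  rewrite Hpx in Hgx. exact Hgx.
Qed.

Lemma supported_fun_equivariant (D : list nat) (g : X -> Y) (p : perm) (x : X) :
  supports (fun_act X Y) D g -> fixes_tuple D p -> g (act X p x) = act Y p (g x).
Proof.
  intros Hg Hp. pose proof (f_equal (fun h => h (act X p x)) (Hg p Hp)) as Hgx.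
  unfold fun_act in Hgx. rewrite act_inv_l in Hgx. symmetry; exact Hgx.
Qed.

Hypothesis HX : orbit_finite (act X) (fun _ => True).
Hypothesis HY : orbit_finite (act Y) (fun _ => True).

Lemma restrictions_finitely_many (D : list nat) (R : list X) :
  (forall x, In x R -> fin_supp (act X) x) ->
  finitely_many (fun t : list Y =>
    exists g, supports (fun_act X Y) D g /\ t = map g R).
Proof.
  induction R as [|x R IH]; intros HR.
  - exists [[]]. intros t [g [_ ->]]. left; reflexivity.
  - destruct IH as [C HC]; [intros z Hz; apply HR; right; exact Hz|].
    destruct (HR x (or_introl eq_refl)) as [s Hs].
    destruct (supported_finitely_many Y HY (D ++ s)) as [LY HLY].
    exists (flat_map (fun y => map (cons y) C) LY).
    intros t [g [Hg ->]]. simpl. apply in_flat_map. exists (g x). split.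
    + apply HLY, supports_apply; assumption.
    + apply in_map, HC. exists g; split; [exact Hg | reflexivity].
Qed.

(* Only finitely many functions X -> Y are supported by a given tuple D:
   such a function is determined by its values on D-orbit representatives. *)
Lemma supported_funs_finitely_many (D : list nat) :
  finitely_many (supports (fun_act X Y) D).
Proof.
  destruct (orbit_finite_reps X HX D) as [R HR].
  destruct (restrictions_finitely_many D R) as [C HC].
  { intros x _. apply (proj1 HX); exact I. }
  destruct (choose_witnesses (fun (t : list Y) (g : X -> Y) =>
     supports (fun_act X Y) D g /\ map g R = t) C) as [Lg [_ HLg]].
  exists Lg. intros g Hg.
  destruct (HLg (map g R)) as [g' [Hg' [Hg'D Hmap]]].
  { apply HC. exists g; split; [exact Hg | reflexivity]. }
  { exists g; split; [exact Hg | reflexivity]. }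
  replace g with g'; [exact Hg'|].
  apply functional_extensionality. intro x.
  destruct (HR x) as [p [x' [Hp [Hx' ->]]]].
  rewrite (supported_fun_equivariant D g p x' Hg Hp),
          (supported_fun_equivariant D g' p x' Hg'D Hp).
  f_equal. apply (proj1 map_ext_in_iff Hmap), Hx'.
Qed.

End Functions.

Theorem mainTheorem3 (X Y : gset)
  (HX : orbit_finite (act X) (fun _ : X => True))
  (HY : orbit_finite (act Y) (fun _ : Y => True))
  (F : (X -> Y) -> Prop)
  (HFsupp : forall f, F f -> fin_supp (fun_act X Y) f)
  (HFeq : equivariant (fun_act X Y) F) :
  orbit_finite (fun_act X Y) F <->
  exists k : nat, forall f, F f -> supp_le (fun_act X Y) k f.
Proof.
  split.
  - exact (orbit_finite_bounded_support (fun_gset X Y) F).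
  - intros [k Hk].
    apply (bounded_support_orbit_finite (fun_gset X Y) F k HFeq Hk).
    exact (supported_funs_finitely_many X Y HX HY (seq 0 k)).
Qed.
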